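(* Let $\mathcal G$ be a connected groupoid and let $F:\mathbf 1\to\mathbf 1$ be a closed complete morphism of $\mathcal H^r(\mathcal G)$. Then for every $g\in\mathcal G$ there exists a morphism $F':H_g\to\mathbf 1$ of $\mathcal H^r(\mathcal G)$ such that $F=F'\circ L_g$.
   Context: Groupoid conventions: a groupoid $\mathcal G$ is a small category in which every morphism is invertible; it is connected if $\mathcal G(i,j)\neq\emptyset$ for all objects $i,j$; $\mathcal G(i,j)$ denotes the morphisms from $i$ to $j$; composition left to right ($g\in\mathcal G(i,j)$, $h\in\mathcal G(j,k)$ give $gh\in\mathcal G(i,k)$); $1_i$ identity, $\bar g$ inverse. Braided monoidal categories: product $\diamond$, unit $\mathbf 1$, braiding $\gamma_{A,B}$, $\bar\gamma_{A,B}:=\gamma_{B,A}^{-1}$; constraints suppressed; $\mathrm{id}_g=\mathrm{id}_{H_g}$, $\gamma_{g,h}=\gamma_{H_g,H_h}$, $\bar\gamma_{g,h}=\bar\gamma_{H_g,H_h}$. $\mathcal H^r(\mathcal G)$ is the braided monoidal category freely generated by objects $H_g$ ($g\in\mathcal G$) and morphisms $\Delta_g:H_g\to H_g\diamond H_g$, $\epsilon_g:H_g\to\mathbf 1$, $m_{g,h}:H_g\diamond H_h\to H_{gh}$, $\eta_i:\mathbf 1\to H_{1_i}$, $S_g,\bar S_g:H_g\to H_{\bar g}$, $l_i:H_{1_i}\to\mathbf 1$, $L_g:\mathbf 1\to H_g$, $v_g,v_g^{-1}:H_g\to H_g$, subject to (composable labels, $g\in\mathcal G(i,j)$): (Hopf)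 $\Delta$ coassociative; $(\epsilon_g\diamond\mathrm{id})\Delta_g=\mathrm{id}_g=(\mathrm{id}\diamond\epsilon_g)\Delta_g$; $m$ associative; $m_{g,1_j}(\mathrm{id}_g\diamond\eta_j)=\mathrm{id}_g=m_{1_i,g}(\eta_i\diamond\mathrm{id}_g)$; $(m_{g,h}\diamond m_{g,h})(\mathrm{id}_g\diamond\gamma_{g,h}\diamond\mathrm{id}_h)(\Delta_g\diamond\Delta_h)=\Delta_{gh}m_{g,h}$; $\epsilon_{gh}m_{g,h}=\epsilon_g\diamond\epsilon_h$; $\Delta_{1_i}\eta_i=\eta_i\diamond\eta_i$; $\epsilon_{1_i}\eta_i=\mathrm{id}_{\mathbf 1}$; $m_{\bar g,g}(S_g\diamond\mathrm{id}_g)\Delta_g=\eta_j\epsilon_g$; $m_{g,\bar g}(\mathrm{id}_g\diamond S_g)\Delta_g=\eta_i\epsilon_g$; $S_{\bar g}\bar S_g=\bar S_{\bar g}S_g=\mathrm{id}_g$. (Integrals) $(\mathrm{id}_{1_i}\diamond l_i)\Delta_{1_i}=\eta_il_i$; $m_{g,h}(L_g\diamond\mathrm{id}_h)=L_{gh}\epsilon_h$; $l_iL_{1_i}=\mathrm{id}_{\mathbf 1}=l_iS_{1_i}L_{1_i}$; $S_gL_g=L_{\bar g}$; $l_iS_{1_i}=l_i$. (Ribbon) $v_gv_g^{-1}=v_g^{-1}v_g=\mathrm{id}_g$; $\epsilon_gv_g=\epsilon_g$; $v_gL_g=L_g$; $S_gv_g=v_{\bar g}S_g$; $m_{g,h}(v_g\diamond\mathrm{id}_h)=v_{gh}m_{g,h}=m_{g,h}(\mathrm{id}_g\diamond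 v_h)$. Copairings $\sigma_{i,i}=(v_{1_i}^{-1}\diamond(v_{1_i}^{-1}S_{1_i}))\Delta_{1_i}v_{1_i}\eta_i$, $\sigma_{i,j}=\eta_i\diamond\eta_j$ ($i\neq j$). For $g\in\mathcal G(p,q)$, $h\in\mathcal G(r,s)$, $k\in\mathrm{Obj}\,\mathcal G$: $\mu_{g,h}=(m_{g,1_q}\diamond m_{1_r,h})(\mathrm{id}_g\diamond\sigma_{q,r}\diamond\mathrm{id}_h)$, $\rho^r_{g,k}=(m_{g,1_q}\diamond\mathrm{id}_{1_k})(\mathrm{id}_g\diamond\sigma_{q,k})$, $\rho^l_{g,k}=(\mathrm{id}_{1_k}\diamond m_{1_p,g})(\sigma_{k,p}\diamond\mathrm{id}_g)$. Required: each $\sigma_{i,j}$ is a Hopf copairing ($(\Delta_{1_i}\diamond\mathrm{id})\sigma_{i,j}=(\mathrm{id}\diamond\mathrm{id}\diamond m_{1_j,1_j})(\mathrm{id}\diamond\sigma_{i,j}\diamond\mathrm{id})\sigma_{i,j}$, $(\mathrm{id}\diamond\Delta_{1_j})\sigma_{i,j}=(m_{1_i,1_i}\diamond\mathrm{id}\diamond\mathrm{id})(\mathrm{id}\diamond\sigma_{i,j}\diamond\mathrm{id})\sigma_{i,j}$, $(\epsilon_{1_i}\diamond\mathrm{id})\sigma_{i,j}=\eta_j$, $(\mathrm{id}\diamond\epsilon_{1_j})\sigma_{i,j}=\eta_i$); $\Delta_gv_g^{-1}=\mu_{g,g}(v_g^{-1}\diamond v_g^{-1})\bar\gamma_{g,g}\Delta_g$;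 for $g\in\mathcal G(p,i)$, $h\in\mathcal G(j,s)$: $(m_{1_j,h}\diamond m_{g,1_i})(S_{1_j}\diamond(\mu_{h,g}\bar\gamma_{g,h}\mu_{g,h})\diamond S_{1_i})(\rho^l_{g,j}\diamond\rho^r_{h,i})=\gamma_{g,h}$. A morphism is closed if its source and target are $\mathbf 1$. A morphism of $\mathcal H^r(\mathcal G)$ is complete if, for an expression of it as a composite of $\diamond$-products of generating morphisms (identities, braidings and their inverses included), the set of labels $g\in\mathcal G$ such that $H_g$ occurs in the source or target of one of these generating morphisms generates, together with the identities of $\mathcal G$, the whole groupoid $\mathcal G$ (every non-identity element is a product of such labels and their inverses); this does not depend on the chosen expression. *)

(* Free braided monoidal category H^r(G) presented by
   raw terms (syntax trees of generating morphisms, composition and tensor),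
   a typing judgment, and the congruence generated by the braided (strict)
   monoidal category axioms together with the defining relations. *)
From Stdlib Require Import List ClassicalEpsilon.
Import ListNotations.
Set Implicit Arguments.

(** Groupoids (composition written left to right: gcomp g h = gh). *)
Record groupoid := Groupoid {
  gobj : Type;
  ghom : gobj -> gobj -> Type;
  gid : forall i, ghom i i;
  gcomp : forall i j k, ghom i j -> ghom j k -> ghom i k;
  ginv : forall i j, ghom i j -> ghom j i;
  gcomp_assoc : forall i j k l (f : ghom i j) (g : ghom j k) (h : ghom k l),
      gcomp (gcomp f g) h = gcomp f (gcomp g h);
  gid_l : forall i j (f : ghom i j), gcomp (gid i) f = f;
  gid_r : forall i j (f : ghom i j), gcomp f (gid j) = f;
  ginv_l : forall i j (f : ghom i j), gcomp (ginv f) f = gid j;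
  ginv_r : forall i j (f : ghom i j), gcomp f (ginv f) = gid i
}.
Arguments gid {_} i.
Arguments gcomp {_ i j k} _ _.
Arguments ginv {_ i j} _.

Definition connected (G : groupoid) : Prop :=
  forall i j : gobj G, inhabited (ghom G i j).

Section Hr.
Variable G : groupoid.

Record lab := Lb { lsrc : gobj G; ltgt : gobj G; larr : ghom G lsrc ltgt }.
Arguments Lb {lsrc ltgt} larr.

(** Objects of H^r(G): words in the H_g (strict monoidal, unit = []). *)
Definition obj := list lab.

(** Raw expressions. [Tcomp f g] is f o g (g first).
    [Tbr A B] = gamma_{A,B} : A<>B -> B<>A,
    [Tbri A B] = bar gamma_{A,B} = gamma_{B,A}^{-1} : A<>B -> B<>A. *)
Inductive tm :=
| Tid (A : obj)
| Tcomp (f g : tm)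
| Ttens (f g : tm)
| Tbr (A B : obj)
| Tbri (A B : obj)
| TDelta i j (g : ghom G i j)
| Teps i j (g : ghom G i j)
| Tm i j k (g : ghom G i j) (h : ghom G j k)
| Teta (i : gobj G)
| TS i j (g : ghom G i j)
| TSb i j (g : ghom G i j)
| Tl (i : gobj G)
| TL i j (g : ghom G i j)
| Tv i j (g : ghom G i j)
| Tvi i j (g : ghom G i j).
Arguments TDelta {i j} g.
Arguments Teps {i j} g.
Arguments Tm {i j k} g h.
Arguments TS {i j} g.
Arguments TSb {i j} g.
Arguments TL {i j} g.
Arguments Tv {i j} g.
Arguments Tvi {i j} g.

Inductive ty : tm -> obj -> obj -> Prop :=
| ty_id A : ty (Tid A) A A
| ty_comp f g A B C : ty g A B -> ty f B C -> ty (Tcomp f g) A C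
| ty_tens f g A B C D : ty f A B -> ty g C D -> ty (Ttens f g) (A ++ C) (B ++ D)
| ty_br A B : ty (Tbr A B) (A ++ B) (B ++ A)
| ty_bri A B : ty (Tbri A B) (A ++ B) (B ++ A)
| ty_Delta i j (g : ghom G i j) : ty (TDelta g) [Lb g] [Lb g; Lb g]
| ty_eps i j (g : ghom G i j) : ty (Teps g) [Lb g] []
| ty_m i j k (g : ghom G i j) (h : ghom G j k) :
    ty (Tm g h) [Lb g; Lb h] [Lb (gcomp g h)]
| ty_eta i : ty (Teta i) [] [Lb (gid i)]
| ty_S i j (g : ghom G i j) : ty (TS g) [Lb g] [Lb (ginv g)]
| ty_Sb i j (g : ghom G i j) : ty (TSb g) [Lb g] [Lb (ginv g)]
| ty_l i : ty (Tl i) [Lb (gid i)] []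
| ty_L i j (g : ghom G i j) : ty (TL g) [] [Lb g]
| ty_v i j (g : ghom G i j) : ty (Tv g) [Lb g] [Lb g]
| ty_vi i j (g : ghom G i j) : ty (Tvi g) [Lb g] [Lb g].

Definition idg i j (g : ghom G i j) : tm := Tid [Lb g].
Arguments idg {i j} g.
Definition g1 (i : gobj G) : ghom G i i := gid i.

Definition sigdiag (i : gobj G) : tm :=
  Tcomp (Ttens (Tvi (g1 i)) (Tcomp (Tvi (g1 i)) (TS (g1 i))))
        (Tcomp (TDelta (g1 i)) (Tcomp (Tv (g1 i)) (Teta i))).

Definition sigma (i j : gobj G) : tm :=
  if excluded_middle_informative (i = j) then sigdiag i
  else Ttens (Teta i) (Teta j).

Definition mu p q r s (g : ghom G p q) (h : ghom G r s) : tm :=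
  Tcomp (Ttens (Tm g (g1 q)) (Tm (g1 r) h))
        (Ttens (Ttens (idg g) (sigma q r)) (idg h)).

Arguments mu {p q r s} g h.

Definition rhor p q (g : ghom G p q) (k : gobj G) : tm :=
  Tcomp (Ttens (Tm g (g1 q)) (idg (g1 k))) (Ttens (idg g) (sigma q k)).

Arguments rhor {p q} g k.

Definition rhol p q (g : ghom G p q) (k : gobj G) : tm :=
  Tcomp (Ttens (idg (g1 k)) (Tm (g1 p) g)) (Ttens (sigma k p) (idg g)).

Arguments rhol {p q} g k.

Inductive heq : tm -> tm -> Prop :=
| heq_refl f : heq f f
| heq_sym f g : heq f g -> heq g f
| heq_trans f g h : heq f g -> heq g h -> heq f h
| heq_comp f f' g g' : heq f f' -> heq g g' -> heq (Tcomp f g) (Tcomp f' g')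
| heq_tens f f' g g' : heq f f' -> heq g g' -> heq (Ttens f g) (Ttens f' g')
| cat_idl f A B : ty f A B -> heq (Tcomp (Tid B) f) f
| cat_idr f A B : ty f A B -> heq (Tcomp f (Tid A)) f
| cat_assoc f g h A B C D : ty h A B -> ty g B C -> ty f C D ->
    heq (Tcomp (Tcomp f g) h) (Tcomp f (Tcomp g h))
| mon_id A B : heq (Ttens (Tid A) (Tid B)) (Tid (A ++ B))
| mon_interchange f f' g g' A B C D E F :
    ty f' A B -> ty f B C -> ty g' D E -> ty g E F ->
    heq (Ttens (Tcomp f f') (Tcomp g g')) (Tcomp (Ttens f g) (Ttens f' g'))
| mon_assoc f g h A B C D E F : ty f A B -> ty g C D -> ty h E F ->
    heq (Ttens (Ttens f g) h) (Ttens f (Ttens g h))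
| mon_unitl f A B : ty f A B -> heq (Ttens (Tid []) f) f
| mon_unitr f A B : ty f A B -> heq (Ttens f (Tid [])) f
| br_nat f g A B C D : ty f A B -> ty g C D ->
    heq (Tcomp (Tbr B D) (Ttens f g)) (Tcomp (Ttens g f) (Tbr A C))
| br_hex1 A B C :
    heq (Tbr A (B ++ C)) (Tcomp (Ttens (Tid B) (Tbr A C)) (Ttens (Tbr A B) (Tid C)))
| br_hex2 A B C :
    heq (Tbr (A ++ B) C) (Tcomp (Ttens (Tbr A C) (Tid B)) (Ttens (Tid A) (Tbr B C)))
| br_inv1 A B : heq (Tcomp (Tbri A B) (Tbr B A)) (Tid (B ++ A))
| br_inv2 A B : heq (Tcomp (Tbr B A) (Tbri A B)) (Tid (A ++ B))
| ax_coassoc i j (g : ghom G i j) :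
    heq (Tcomp (Ttens (TDelta g) (idg g)) (TDelta g))
        (Tcomp (Ttens (idg g) (TDelta g)) (TDelta g))
| ax_counitl i j (g : ghom G i j) :
    heq (Tcomp (Ttens (Teps g) (idg g)) (TDelta g)) (idg g)
| ax_counitr i j (g : ghom G i j) :
    heq (Tcomp (Ttens (idg g) (Teps g)) (TDelta g)) (idg g)
| ax_massoc i j k l (g : ghom G i j) (h : ghom G j k) (f : ghom G k l) :
    heq (Tcomp (Tm (gcomp g h) f) (Ttens (Tm g h) (idg f)))
        (Tcomp (Tm g (gcomp h f)) (Ttens (idg g) (Tm h f)))
| ax_unitr i j (g : ghom G i j) :
    heq (Tcomp (Tm g (g1 j)) (Ttens (idg g) (Teta j))) (idg g)
| ax_unitl i j (g : ghom G i j) :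
    heq (Tcomp (Tm (g1 i) g) (Ttens (Teta i) (idg g))) (idg g)
| ax_bialg i j k (g : ghom G i j) (h : ghom G j k) :
    heq (Tcomp (Ttens (Tm g h) (Tm g h))
           (Tcomp (Ttens (Ttens (idg g) (Tbr [Lb g] [Lb h])) (idg h))
                  (Ttens (TDelta g) (TDelta h))))
        (Tcomp (TDelta (gcomp g h)) (Tm g h))
| ax_epsm i j k (g : ghom G i j) (h : ghom G j k) :
    heq (Tcomp (Teps (gcomp g h)) (Tm g h)) (Ttens (Teps g) (Teps h))
| ax_deltaeta i : heq (Tcomp (TDelta (g1 i)) (Teta i)) (Ttens (Teta i) (Teta i))
| ax_epseta i : heq (Tcomp (Teps (g1 i)) (Teta i)) (Tid [])
| ax_antil i j (g : ghom G i j) :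
    heq (Tcomp (Tm (ginv g) g) (Tcomp (Ttens (TS g) (idg g)) (TDelta g)))
        (Tcomp (Teta j) (Teps g))
| ax_antir i j (g : ghom G i j) :
    heq (Tcomp (Tm g (ginv g)) (Tcomp (Ttens (idg g) (TS g)) (TDelta g)))
        (Tcomp (Teta i) (Teps g))
| ax_SSb i j (g : ghom G i j) : heq (Tcomp (TS (ginv g)) (TSb g)) (idg g)
| ax_SbS i j (g : ghom G i j) : heq (Tcomp (TSb (ginv g)) (TS g)) (idg g)
| ax_lint i :
    heq (Tcomp (Ttens (idg (g1 i)) (Tl i)) (TDelta (g1 i))) (Tcomp (Teta i) (Tl i))
| ax_Lint i j k (g : ghom G i j) (h : ghom G j k) :
    heq (Tcomp (Tm g h) (Ttens (TL g) (idg h))) (Tcomp (TL (gcomp g h)) (Teps h))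
| ax_lL i : heq (Tcomp (Tl i) (TL (g1 i))) (Tid [])
| ax_lSL i : heq (Tcomp (Tl i) (Tcomp (TS (g1 i)) (TL (g1 i)))) (Tid [])
| ax_SL i j (g : ghom G i j) : heq (Tcomp (TS g) (TL g)) (TL (ginv g))
| ax_lS i : heq (Tcomp (Tl i) (TS (g1 i))) (Tl i)
| ax_vvi i j (g : ghom G i j) : heq (Tcomp (Tv g) (Tvi g)) (idg g)
| ax_viv i j (g : ghom G i j) : heq (Tcomp (Tvi g) (Tv g)) (idg g)
| ax_epsv i j (g : ghom G i j) : heq (Tcomp (Teps g) (Tv g)) (Teps g)
| ax_vL i j (g : ghom G i j) : heq (Tcomp (Tv g) (TL g)) (TL g)
| ax_Sv i j (g : ghom G i j) : heq (Tcomp (TS g) (Tv g)) (Tcomp (Tv (ginv g)) (TS g))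
| ax_mvl i j k (g : ghom G i j) (h : ghom G j k) :
    heq (Tcomp (Tm g h) (Ttens (Tv g) (idg h))) (Tcomp (Tv (gcomp g h)) (Tm g h))
| ax_mvr i j k (g : ghom G i j) (h : ghom G j k) :
    heq (Tcomp (Tm g h) (Ttens (idg g) (Tv h))) (Tcomp (Tv (gcomp g h)) (Tm g h))
| ax_cop1 i j :
    heq (Tcomp (Ttens (TDelta (g1 i)) (idg (g1 j))) (sigma i j))
        (Tcomp (Ttens (Ttens (idg (g1 i)) (idg (g1 i))) (Tm (g1 j) (g1 j)))
           (Tcomp (Ttens (Ttens (idg (g1 i)) (sigma i j)) (idg (g1 j))) (sigma i j)))
| ax_cop2 i j :
    heq (Tcomp (Ttens (idg (g1 i)) (TDelta (g1 j))) (sigma i j))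
        (Tcomp (Ttens (Tm (g1 i) (g1 i)) (Ttens (idg (g1 j)) (idg (g1 j))))
           (Tcomp (Ttens (Ttens (idg (g1 i)) (sigma i j)) (idg (g1 j))) (sigma i j)))
| ax_cop3 i j :
    heq (Tcomp (Ttens (Teps (g1 i)) (idg (g1 j))) (sigma i j)) (Teta j)
| ax_cop4 i j :
    heq (Tcomp (Ttens (idg (g1 i)) (Teps (g1 j))) (sigma i j)) (Teta i)
| ax_Dvi i j (g : ghom G i j) :
    heq (Tcomp (TDelta g) (Tvi g))
        (Tcomp (mu g g) (Tcomp (Ttens (Tvi g) (Tvi g))
                               (Tcomp (Tbri [Lb g] [Lb g]) (TDelta g))))
| ax_braid p i j s (g : ghom G p i) (h : ghom G j s) :
    heq (Tcomp (Ttens (Tm (g1 j) h) (Tm g (g1 i)))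
          (Tcomp (Ttens (Ttens (TS (g1 j))
                               (Tcomp (mu h g) (Tcomp (Tbri [Lb g] [Lb h]) (mu g h))))
                        (TS (g1 i)))
                 (Ttens (rhol g j) (rhor h i))))
        (Tbr [Lb g] [Lb h]).

Fixpoint labels (t : tm) : list lab :=
  match t with
  | Tid A => A
  | Tcomp f g => labels f ++ labels g
  | Ttens f g => labels f ++ labels g
  | Tbr A B => A ++ B
  | Tbri A B => A ++ B
  | TDelta g => [Lb g]
  | Teps g => [Lb g]
  | Tm g h => [Lb g; Lb h; Lb (gcomp g h)]
  | Teta i => [Lb (gid i)]
  | TS g => [Lb g; Lb (ginv g)]
  | TSb g => [Lb g; Lb (ginv g)]
  | Tl i => [Lb (gid i)]
  | TL g => [Lb g]
  | Tv g => [Lb g]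
  | Tvi g => [Lb g]
  end.

Inductive gen (S : lab -> Prop) : forall i j : gobj G, ghom G i j -> Prop :=
| gen_id i : gen S i i (gid i)
| gen_lab i j (g : ghom G i j) : S (Lb g) -> gen S i j g
| gen_inv i j (g : ghom G i j) : gen S i j g -> gen S j i (ginv g)
| gen_comp i j k (g : ghom G i j) (h : ghom G j k) :
    gen S i j g -> gen S j k h -> gen S i k (gcomp g h).

Definition generates (S : lab -> Prop) : Prop :=
  forall i j (g : ghom G i j), gen S i j g.

Definition closed (F : tm) : Prop := ty F [] [].

Definition complete (F : tm) : Prop :=
  exists t, ty t [] [] /\ heq t F /\ generates (fun x => In x (labels t)).

End Hr.
Arguments Lb {G lsrc ltgt} larr.
Arguments Tid {G} A.
Arguments Tcomp {G} f g.
Arguments Ttens {G} f g.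
Arguments Tbr {G} A B.
Arguments Tbri {G} A B.
Arguments TDelta {G i j} g.
Arguments Teps {G i j} g.
Arguments Tm {G i j k} g h.
Arguments Teta {G} i.
Arguments TS {G i j} g.
Arguments TSb {G i j} g.
Arguments Tl {G} i.
Arguments TL {G i j} g.
Arguments Tv {G i j} g.
Arguments Tvi {G i j} g.

(** Call D : P -> B divisible by y when D = D' o (L_y <> id_P) for some D'
    mentioning every label of D.  With shift_{h,k} built from m, S and Delta,
    the integral property m(L <> id) = L eps and the counit give
    shift_{h,k} (L_{hk} <> id_k) = L_h <> id_k; together with l_a L_{1_a} = id
    this makes id_{H_y} divisible by y.  Divisibility by y passes from a factor
    to a composite or tensor product (the braiding carries L_y past the
    strands on its left), and every label of a generator occurs in its source
    or target, so a morphism is divisible by each label it mentions.  The set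
    of y by which a fixed morphism is divisible contains the identities
    (l_i L_{1_i} = id) and is closed under inverses (S_{bar g} L_{bar g} = L_g)
    and products ((L_g <> id_h) L_h = shift_{g,h} (id <> L_h) L_{gh}); for a
    complete F it is thus the whole groupoid. *)
From Stdlib Require Import List Setoid Morphisms.
Import ListNotations.

Lemma ginv_involutive {G : groupoid} {i j} (g : ghom G i j) : ginv (ginv g) = g.
Proof.
  rewrite <- (gid_r G _ _ (ginv (ginv g))), <- (ginv_l G _ _ g).
  rewrite <- gcomp_assoc, ginv_l. apply gid_l.
Qed.

Lemma gcomp_ginvK {G : groupoid} {i j k} (h : ghom G i j) (g : ghom G j k) :
  gcomp (gcomp h g) (ginv g) = h.
Proof. rewrite gcomp_assoc, ginv_r. apply gid_r. Qed.

Lemma ty_conv {G} (f : tm G) A B A' B' :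
  ty f A B -> A' = A -> B' = B -> ty f A' B'.
Proof. now intros H -> ->. Qed.

Lemma ty_comp_conv {G} (f g : tm G) A B B' C :
  ty g A B -> ty f B' C -> B' = B -> ty (Tcomp f g) A C.
Proof. intros Hg Hf ->; econstructor; eauto. Qed.

Ltac obj_eq := solve [ reflexivity
  | simpl; repeat rewrite ?gcomp_ginvK, ?ginv_involutive, ?gid_l, ?gid_r,
      ?ginv_l, ?ginv_r, ?app_nil_r, <- ?app_assoc; simpl; reflexivity ].

Ltac ty_infer := lazymatch goal with
  | |- ty (Tcomp _ _) _ _ => eapply ty_comp_conv; [ty_infer | ty_infer | obj_eq]
  | |- ty (Ttens _ _) _ _ => eapply ty_tens; [ty_infer | ty_infer]
  | |- ty (idg _) _ _ => unfold idg; apply ty_id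
  | |- ty _ _ _ => first [ eassumption | econstructor ]
  end.

Ltac typecheck := eapply ty_conv; [ty_infer | obj_eq | obj_eq].

#[export] Instance heq_Equivalence {G} : Equivalence (@heq G).
Proof. split; red; [apply heq_refl | apply heq_sym | apply heq_trans]. Qed.

#[export] Instance Tcomp_Proper {G} : Proper (@heq G ==> @heq G ==> @heq G) Tcomp.
Proof. intros ? ? ? ? ? ?; apply heq_comp; auto. Qed.

#[export] Instance Ttens_Proper {G} : Proper (@heq G ==> @heq G ==> @heq G) Ttens.
Proof. intros ? ? ? ? ? ?; apply heq_tens; auto. Qed.

Section Monoidal.
Context {G : groupoid}.

Lemma tens_split_l {f g : tm G} {A B C D} : ty f A B -> ty g C D ->
  heq (Ttens f g) (Tcomp (Ttens (Tid B) g) (Ttens f (Tid C))).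
Proof.
  intros Hf Hg. erewrite <- mon_interchange by typecheck.
  erewrite cat_idl by typecheck. erewrite cat_idr by typecheck. reflexivity.
Qed.

Lemma tens_split_r {f g : tm G} {A B C D} : ty f A B -> ty g C D ->
  heq (Ttens f g) (Tcomp (Ttens f (Tid D)) (Ttens (Tid A) g)).
Proof.
  intros Hf Hg. erewrite <- mon_interchange by typecheck.
  erewrite cat_idl by typecheck. erewrite cat_idr by typecheck. reflexivity.
Qed.

Lemma comp_tens_idr (f g : tm G) A B C X : ty g A B -> ty f B C ->
  heq (Ttens (Tcomp f g) (Tid X)) (Tcomp (Ttens f (Tid X)) (Ttens g (Tid X))).
Proof.
  intros Hg Hf. erewrite <- mon_interchange by typecheck.
  erewrite cat_idl by typecheck. reflexivity.
Qed.

Lemma state_natural (p X : tm G) P A B : ty p [] P -> ty X A B ->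
  heq (Tcomp (Ttens (Tid P) X) (Ttens p (Tid A))) (Tcomp (Ttens p (Tid B)) X).
Proof.
  intros Hp HX. rewrite <- (tens_split_l Hp HX), (tens_split_r Hp HX).
  erewrite mon_unitl by eassumption. reflexivity.
Qed.

Lemma effect_comp_tens (X e : tm G) A C : ty X A [] -> ty e C [] ->
  heq (Tcomp X (Ttens (Tid A) e)) (Ttens X e).
Proof.
  intros HX He. rewrite (tens_split_r HX He). erewrite mon_unitr by typecheck.
  reflexivity.
Qed.

Lemma br_nil_l (C : obj G) : heq (Tbr [] C) (Tid C).
Proof.
  assert (Hidem : heq (Tbr [] C) (Tcomp (Tbr [] C) (Tbr [] C))).
  { etransitivity; [apply (br_hex2 [] [] C)|]. simpl.
    erewrite mon_unitr by typecheck. erewrite mon_unitl by typecheck. reflexivity. }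
  pose proof (br_inv1 C []) as Hinv. simpl in Hinv.
  rewrite <- Hinv. rewrite Hidem at 2. erewrite <- cat_assoc by typecheck.
  rewrite Hinv. erewrite cat_idl by typecheck. reflexivity.
Qed.

Lemma state_tens_br (p : tm G) P (A : obj G) : ty p [] P ->
  heq (Ttens (Tid A) p) (Tcomp (Tbr P A) (Ttens p (Tid A))).
Proof.
  intros Hp. erewrite br_nat by typecheck. rewrite br_nil_l.
  erewrite cat_idr by typecheck. reflexivity.
Qed.

End Monoidal.

Section Hopf.
Context {G : groupoid}.

Lemma eps_antipode b c (k : ghom G b c) :
  heq (Tcomp (Teps (ginv k)) (TS k)) (Teps k).
Proof.
  pose proof (ax_counitr G _ _ k) as Hcounit. unfold idg in Hcounit.
  transitivity (Tcomp (Tcomp (Teps (ginv k)) (TS k))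
                      (Tcomp (Ttens (Tid [Lb k]) (Teps k)) (TDelta k))).
  { rewrite Hcounit. erewrite cat_idr by typecheck. reflexivity. }
  erewrite <- cat_assoc by typecheck. erewrite effect_comp_tens by typecheck.
  rewrite <- (cat_idr (f := Teps k)) at 1 by typecheck.
  erewrite mon_interchange by typecheck.
  rewrite <- (ax_epsm G _ _ _ (ginv k) k).
  pose proof (ax_antil G _ _ k) as Hanti. unfold idg in Hanti.
  erewrite cat_assoc by typecheck. erewrite cat_assoc by typecheck.
  rewrite Hanti, (ginv_l G _ _ k).
  erewrite <- cat_assoc by typecheck. rewrite (ax_epseta G c).
  erewrite cat_idl by typecheck. reflexivity.
Qed.

(* Applied to L_{hk} <> id_k: m(L_{hk} <> S k_1) = L_{hk bar k} eps(S k_1)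
   and eps S = eps, so the counit leaves L_{hk bar k} <> id_k = L_h <> id_k. *)
Definition shift {a b c} (h : ghom G a b) (k : ghom G b c) : tm G :=
  Tcomp (Ttens (Tm (gcomp h k) (ginv k)) (Tid [Lb k]))
   (Tcomp (Ttens (Ttens (Tid [Lb (gcomp h k)]) (TS k)) (Tid [Lb k]))
          (Ttens (Tid [Lb (gcomp h k)]) (TDelta k))).

Lemma ty_shift {a b c} (h : ghom G a b) (k : ghom G b c) :
  ty (shift h k) [Lb (gcomp h k); Lb k] [Lb h; Lb k].
Proof. unfold shift. typecheck. Qed.

Lemma shift_integral {a b c} (h : ghom G a b) (k : ghom G b c) :
  heq (Tcomp (shift h k) (Ttens (TL (gcomp h k)) (Tid [Lb k])))
      (Ttens (TL h) (Tid [Lb k])).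
Proof.
  transitivity (Ttens (TL (gcomp (gcomp h k) (ginv k))) (Tid [Lb k]));
    [unfold shift | now rewrite gcomp_ginvK].
  erewrite cat_assoc by typecheck. erewrite (cat_assoc (f := Ttens (Ttens _ _) _)) by typecheck.
  erewrite state_natural by typecheck.
  erewrite <- (cat_assoc (f := Ttens (Ttens _ _) _)) by typecheck.
  erewrite mon_assoc by typecheck. erewrite state_natural by typecheck.
  rewrite <- (mon_id [Lb (ginv k)] [Lb k]).
  erewrite <- mon_assoc by typecheck.
  erewrite <- (cat_assoc (f := Ttens (Tm _ _) _)) by typecheck.
  erewrite <- (cat_assoc (f := Ttens (Tm _ _) _)) by typecheck.
  erewrite <- (mon_interchange (f := Tm _ _)) by typecheck.
  pose proof (ax_Lint G _ _ _ (gcomp h k) (ginv k)) as HL. unfold idg in HL.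
  rewrite HL. erewrite cat_idl by typecheck.
  rewrite comp_tens_idr by typecheck.
  erewrite (cat_assoc (f := Ttens (TL _) _)) by typecheck.
  rewrite <- comp_tens_idr by typecheck. rewrite eps_antipode.
  erewrite (cat_assoc (f := Ttens (TL _) _)) by typecheck.
  pose proof (ax_counitl G _ _ k) as Hcounit. unfold idg in Hcounit.
  rewrite Hcounit. erewrite cat_idr by typecheck. reflexivity.
Qed.

Lemma integral_comp i j k (g : ghom G i j) (h : ghom G j k) (P : obj G) :
  heq (Tcomp (Ttens (Tcomp (shift g h) (Ttens (Tid [Lb (gcomp g h)]) (TL h))) (Tid P))
             (Ttens (TL (gcomp g h)) (Tid P)))
      (Tcomp (Ttens (TL g) (Tid (Lb h :: P))) (Ttens (TL h) (Tid P))).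
Proof.
  pose proof (ty_shift g h).
  rewrite <- comp_tens_idr by typecheck. erewrite cat_assoc by typecheck.
  rewrite <- (mon_unitr (f := TL (gcomp g h))) by typecheck.
  erewrite state_natural by typecheck.
  erewrite <- cat_assoc by typecheck. rewrite shift_integral.
  rewrite comp_tens_idr by typecheck. erewrite mon_assoc by typecheck.
  rewrite mon_id. reflexivity.
Qed.

End Hopf.

Section Divisibility.
Context {G : groupoid}.

(* Keeping the labels of D inside D' lets divisibility by h and then by g be
   obtained in succession. *)
Definition divisible (D : tm G) {i j} (y : ghom G i j) (P B : obj G) : Prop :=
  exists D', ty D' (Lb y :: P) B /\ heq D (Tcomp D' (Ttens (TL y) (Tid P)))
             /\ incl (labels D) (labels D').

Ltac incl_tac := let z := fresh in intro z; simpl;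
  repeat match goal with H : incl _ _ |- _ => specialize (H z) end;
  repeat rewrite in_app_iff in *; simpl in *; tauto.

Lemma divisible_heq (D1 D2 : tm G) {i j} (y : ghom G i j) P B :
  heq D1 D2 -> incl (labels D2) (labels D1) ->
  divisible D1 y P B -> divisible D2 y P B.
Proof.
  intros He Hi [D' [HD' [Hfac Hlab]]]. exists D'. split; [exact HD'|split].
  - rewrite <- He; exact Hfac.
  - incl_tac.
Qed.

Lemma divisible_compl (f g : tm G) {i j} (y : ghom G i j) A B C :
  divisible f y B C -> ty g A B -> divisible (Tcomp f g) y A C.
Proof.
  intros [f' [Hf' [Hfac Hlab]]] Hg.
  exists (Tcomp f' (Ttens (Tid [Lb y]) g)). split; [typecheck|split].
  - rewrite Hfac. erewrite cat_assoc by typecheck.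
    erewrite <- state_natural by typecheck. erewrite cat_assoc by typecheck. reflexivity.
  - incl_tac.
Qed.

Lemma divisible_compr (f g : tm G) {i j} (y : ghom G i j) A B C :
  ty f B C -> divisible g y A B -> divisible (Tcomp f g) y A C.
Proof.
  intros Hf [g' [Hg' [Hfac Hlab]]].
  exists (Tcomp f g'). split; [typecheck|split].
  - rewrite Hfac. erewrite cat_assoc by typecheck. reflexivity.
  - incl_tac.
Qed.

Lemma divisible_tensl (f g : tm G) {i j} (y : ghom G i j) A B C D :
  divisible f y A B -> ty g C D -> divisible (Ttens f g) y (A ++ C) (B ++ D).
Proof.
  intros [f' [Hf' [Hfac Hlab]]] Hg.
  exists (Ttens f' g). split; [typecheck|split].
  - transitivity (Ttens (Tcomp f' (Ttens (TL y) (Tid A))) (Tcomp g (Tid C))).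
    { rewrite <- Hfac. erewrite cat_idr by typecheck. reflexivity. }
    erewrite mon_interchange by typecheck. erewrite mon_assoc by typecheck.
    rewrite mon_id. reflexivity.
  - incl_tac.
Qed.

Lemma divisible_tensr (f g : tm G) {i j} (y : ghom G i j) A B C D :
  ty f A B -> divisible g y C D -> divisible (Ttens f g) y (A ++ C) (B ++ D).
Proof.
  intros Hf [g' [Hg' [Hfac Hlab]]].
  exists (Tcomp (Ttens f g') (Ttens (Tbr [Lb y] A) (Tid C))). split; [typecheck|split].
  - transitivity (Ttens (Tcomp f (Tid A)) (Tcomp g' (Ttens (TL y) (Tid C)))).
    { rewrite <- Hfac. erewrite cat_idr by typecheck. reflexivity. }
    erewrite mon_interchange by typecheck. erewrite <- (mon_assoc (f := Tid A)) by typecheck.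
    erewrite state_tens_br by typecheck. rewrite comp_tens_idr by typecheck.
    erewrite mon_assoc by typecheck. rewrite mon_id.
    erewrite <- cat_assoc by typecheck. reflexivity.
  - incl_tac.
Qed.

(* id_y = (l_a L_{1_a}) <> id_y = (l_a <> id_y) (shift 1_a y) (L_y <> id_y). *)
Lemma divisible_id1 {a b} (y : ghom G a b) : divisible (Tid [Lb y]) y [Lb y] [Lb y].
Proof.
  pose proof (shift_integral (gid a) y) as Hshift. rewrite (gid_l G) in Hshift.
  pose proof (ty_shift (gid a) y) as Hty. rewrite (gid_l G) in Hty.
  exists (Tcomp (Ttens (Tl a) (Tid [Lb y])) (shift (gid a) y)).
  split; [typecheck|split].
  - transitivity (Ttens (Tcomp (Tl a) (TL (gid a))) (Tcomp (Tid [Lb y]) (Tid [Lb y]))).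
    { rewrite (ax_lL G a). erewrite cat_idl by typecheck. erewrite mon_unitl by typecheck.
      reflexivity. }
    erewrite mon_interchange by typecheck. rewrite <- Hshift.
    erewrite <- cat_assoc by typecheck. reflexivity.
  - incl_tac.
Qed.

Lemma divisible_id (A : obj G) {a b} (y : ghom G a b) :
  In (Lb y) A -> divisible (Tid A) y A A.
Proof.
  intros Hin. destruct (in_split _ _ Hin) as [A1 [A2 ->]].
  eapply divisible_heq with (D1 := Ttens (Tid A1) (Ttens (Tid [Lb y]) (Tid A2))).
  - rewrite !mon_id. reflexivity.
  - incl_tac.
  - apply (divisible_tensr _ _ y A1 A1 ([Lb y] ++ A2) ([Lb y] ++ A2)); [constructor|].
    apply (divisible_tensl _ _ y [Lb y] [Lb y] A2 A2); [apply divisible_id1 | constructor].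
Qed.

Lemma divisible_boundary (D : tm G) {a b} (y : ghom G a b) P B :
  ty D P B -> In (Lb y) (P ++ B) -> divisible D y P B.
Proof.
  intros HD Hin. apply in_app_or in Hin as [Hin|Hin].
  - eapply divisible_heq; [| | eapply divisible_compr; [exact HD | apply divisible_id, Hin]].
    + erewrite cat_idr by typecheck. reflexivity.
    + incl_tac.
  - eapply divisible_heq; [| | eapply divisible_compl; [apply divisible_id, Hin | exact HD]].
    + erewrite cat_idl by typecheck. reflexivity.
    + incl_tac.
Qed.

(* Each generating morphism mentions only labels of its source and target. *)
Lemma divisible_labels {D : tm G} {P B} : ty D P B ->
  forall {a b} (y : ghom G a b), In (Lb y) (labels D) -> divisible D y P B.
Proof.
  induction 1 as [| f g A B C Hg IHg Hf IHf | f g A B C D Hf IHf Hg IHg | | | | | | | | | | | |];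
    intros a0 b0 y Hin; simpl in Hin.
  2: { apply in_app_or in Hin as [Hin|Hin].
       - eapply divisible_compl; [apply IHf, Hin | exact Hg].
       - eapply divisible_compr; [exact Hf | apply IHg, Hin]. }
  2: { apply in_app_or in Hin as [Hin|Hin].
       - apply divisible_tensl; [apply IHf, Hin | exact Hg].
       - apply divisible_tensr; [exact Hf | apply IHg, Hin]. }
  all: apply divisible_boundary; [constructor |].
  all: rewrite ?in_app_iff in *; simpl in *; rewrite ?in_app_iff in *; tauto.
Qed.

Lemma divisible_gid (D : tm G) P B i : ty D P B -> divisible D (gid i) P B.
Proof.
  intros HD. exists (Tcomp D (Ttens (Tl i) (Tid P))). split; [typecheck|split].
  - erewrite cat_assoc by typecheck. rewrite <- comp_tens_idr by typecheck.
    rewrite (ax_lL G i). erewrite mon_unitl by typecheck.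
    erewrite cat_idr by typecheck. reflexivity.
  - incl_tac.
Qed.

Lemma divisible_ginv (D : tm G) {i j} (g : ghom G i j) P B :
  divisible D g P B -> divisible D (ginv g) P B.
Proof.
  intros [D1 [HD1 [Hfac Hlab]]].
  exists (Tcomp D1 (Ttens (TS (ginv g)) (Tid P))). split; [typecheck|split].
  - rewrite Hfac. erewrite cat_assoc by typecheck. rewrite <- comp_tens_idr by typecheck.
    rewrite (ax_SL G _ _ (ginv g)), ginv_involutive. reflexivity.
  - incl_tac.
Qed.

Lemma divisible_gcomp (D D1 : tm G) {i j k} (g : ghom G i j) (h : ghom G j k) P B :
  heq D (Tcomp D1 (Ttens (TL h) (Tid P))) -> incl (labels D) (labels D1) ->
  divisible D1 g (Lb h :: P) B -> divisible D (gcomp g h) P B.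
Proof.
  intros Hfac1 Hlab1 [D2 [HD2 [Hfac2 Hlab2]]].
  pose proof (ty_shift g h).
  exists (Tcomp D2 (Ttens (Tcomp (shift g h) (Ttens (Tid [Lb (gcomp g h)]) (TL h)))
                          (Tid P))).
  split; [typecheck|split].
  - rewrite Hfac1, Hfac2. erewrite cat_assoc by typecheck. erewrite cat_assoc by typecheck.
    rewrite integral_comp. reflexivity.
  - incl_tac.
Qed.

Lemma divisible_gen {S : lab G -> Prop} {i j} {g : ghom G i j} :
  gen S i j g -> forall D P B, ty D P B -> (forall x, S x -> In x (labels D)) ->
  divisible D g P B.
Proof.
  induction 1 as [i | i j g HS | i j g Hgen IH | i j k g h Hg IHg Hh IHh];
    intros D P B HD HSD.
  - apply divisible_gid, HD.
  - apply (divisible_labels HD), HSD, HS.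
  - apply divisible_ginv, IH; assumption.
  - destruct (IHh D P B HD HSD) as [D1 [HD1 [Hfac1 Hlab1]]].
    apply (divisible_gcomp D D1 g h P B Hfac1 Hlab1), IHg; [exact HD1|].
    intros x Hx. apply Hlab1, HSD, Hx.
Qed.

End Divisibility.

Theorem lemma8p5 (G : groupoid) (Hconn : connected G) (F : tm G)
  (HFc : closed F) (HFcomp : complete F) :
  forall (i j : gobj G) (g : ghom G i j),
    exists F' : tm G, ty F' [Lb g] [] /\ heq F (Tcomp F' (TL g)).
Proof.
  (* Completeness alone suffices: it provides a closed expression of F whose
     labels generate every g. *)
  intros i j g. destruct HFcomp as [t [Ht [HtF Hgen]]].
  destruct (divisible_gen (Hgen i j g) _ _ _ Ht (fun x Hx => Hx)) as [F' [HF' [Hfac _]]].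
  exists F'. split; [exact HF'|].
  rewrite <- HtF, Hfac. erewrite mon_unitr by typecheck. reflexivity.
Qed.
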